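(* Let $x_0\in\mathbb{R}^2$, $r_0>0$, and let $E$ be a relatively closed subset of $B(x_0,r_0)$ such that $x_0\in E$, $\beta_E(x_0,r_0)\le1/32$, $E$ separates $B(x_0,r_0)$, and $\mathcal{H}^1(E)\le(2+1/8)r_0$. Then there exists a set $\Xi\subset(r_0/16,r_0)$ with $\mathcal{L}^1((r_0/16,r_0)\setminus\Xi)\le r_0/4$ such that for all $\rho\in\Xi$, the set $E\cap\partial B(x_0,\rho)$ consists of exactly two points at distance larger than $\rho$ from each other.
   Context: $B(x,r)$ is the open ball. $\beta_E(x_0,r_0)=r_0^{-1}\inf_\ell\sup_{y\in E\cap B(x_0,r_0)}\mathrm{dist}(y,\ell)$, infimum over lines through $x_0$ (attained); with $\nu$ a unit normal of a minimizing line and $D^\pm_t=\{z\in B(x_0,r_0):\pm(z-x_0)\cdot\nu>t\}$, $E$ separates $B(x_0,r_0)$ if $\beta:=\beta_E(x_0,r_0)\le1/2$ and $D^+_{\beta r_0}$, $D^-_{\beta r_0}$ lie in distinct connected components of $B(x_0,r_0)\setminus E$. *)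

(* The plane R^2 is modelled as R * R (product
   topology = Euclidean topology) with the Euclidean distance. *)
From HB Require Import structures.
From mathcomp Require Import all_boot all_order all_algebra.
From mathcomp Require Import all_classical all_reals all_analysis.
Set Implicit Arguments. Unset Strict Implicit. Unset Printing Implicit Defensive.
Import Order.TTheory GRing.Theory Num.Theory.
Import numFieldNormedType.Exports.
Local Open Scope classical_set_scope.
Local Open Scope ring_scope.

Notation pt R := (R * R)%type (only parsing).

Section Plane.
Variable R : realType.
Local Notation pt := (pt R).

Definition dot (p q : pt) : R := p.1 * q.1 + p.2 * q.2.
Definition psub (p q : pt) : pt := (p.1 - q.1, p.2 - q.2).
Definition eudist (p q : pt) : R := Num.sqrt (dot (psub p q) (psub p q)).

Definition oball (x : pt) (r : R) : set pt := [set y | eudist x y < r].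
Definition sphere (x : pt) (rho : R) : set pt := [set y | eudist x y = rho].

Definition rel_closed (E B : set pt) : Prop :=
  E `<=` B /\ exists F : set pt, closed F /\ E = F `&` B.

Definition unit_vec (nu : pt) : Prop := dot nu nu = 1.

(* r0 * (flatness wrt the line through x0 with unit normal nu):
   sup_{y in E cap B(x0,r0)} dist(y, line) *)
Definition line_width (E : set pt) (x0 : pt) (r0 : R) (nu : pt) : R :=
  sup [set `|dot (psub y x0) nu| | y in E `&` oball x0 r0].

Definition beta (E : set pt) (x0 : pt) (r0 : R) : R :=
  r0^-1 * inf [set line_width E x0 r0 nu | nu in unit_vec].

Definition Dplus (x0 : pt) (r0 : R) (nu : pt) (t : R) : set pt :=
  [set z | oball x0 r0 z /\ dot (psub z x0) nu > t].
Definition Dminus (x0 : pt) (r0 : R) (nu : pt) (t : R) : set pt :=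
  [set z | oball x0 r0 z /\ - dot (psub z x0) nu > t].

Definition separates (E : set pt) (x0 : pt) (r0 : R) : Prop :=
  beta E x0 r0 <= 2^-1 /\
  exists nu : pt, [/\ unit_vec nu,
    line_width E x0 r0 nu = beta E x0 r0 * r0 &
    let U := oball x0 r0 `\` E in
    let t := beta E x0 r0 * r0 in
    exists a b : pt,
      [/\ Dplus x0 r0 nu t `<=` connected_component U a,
          Dminus x0 r0 nu t `<=` connected_component U b &
          connected_component U a <> connected_component U b]].

(* diameter (0 for the empty set, possibly +oo) *)
Definition diam (A : set pt) : \bar R :=
  ereal_sup ([set 0%E] `|` [set (eudist p q)%:E | p in A & q in A]).

(* delta-approximating 1-dimensional Hausdorff measure (normalised so that
   H^1 agrees with length: omega_1 (diam/2)^1 = diam) *)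
Definition hausdorff1_delta (E : set pt) (delta : R) : \bar R :=
  ereal_inf [set (\sum_(0 <= i <oo) diam (C i))%E | C in
    [set C : nat -> set pt | E `<=` \bigcup_i C i /\
                             forall i, (diam (C i) <= delta%:E)%E]].

Definition hausdorff1 (E : set pt) : \bar R :=
  ereal_sup [set hausdorff1_delta E delta | delta in [set d : R | 0 < d]].

End Plane.

(* Since E separates the ball and lies in a strip of half-width r0/32 around a
   line through x0, for r0/16 < rho < r0 each of the two half circles of radius
   rho joining the two sides of the strip must meet E, and these two points are
   more than rho apart.  On the other hand, covering E by sets C_i of small diameter and
   counting for each rho the pieces whose radial image [inf d(x0, .), sup d(x0, .)]
   contains rho gives an Eilenberg-type inequality: the integral of this count is
   at most sum_i diam C_i, i.e. about H^1(E) <= (2 + 1/8) r0.  The count is at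
   least 2 on (r0/16, r0), of length 15 r0 / 16, so it reaches 3 -- which it does
   wherever the sphere carries a third point of E -- only on a set of measure at
   most r0/4 + eps; letting the covers shrink removes eps. *)
From HB Require Import structures.
From mathcomp Require Import all_boot all_order all_algebra.
From mathcomp Require Import all_classical all_reals all_analysis.
From mathcomp Require Import ring lra measurable_realfun.
Set Implicit Arguments. Unset Strict Implicit. Unset Printing Implicit Defensive.
Import Order.TTheory GRing.Theory Num.Theory.
Import numFieldNormedType.Exports.
Local Open Scope classical_set_scope.
Local Open Scope ring_scope.

Section Euclid.
Variable R : realType.
Implicit Types (p q r x nu : pt R) (s w rho : R).

Lemma eudist_sqr p q : eudist p q ^+ 2 = (p.1 - q.1) ^+ 2 + (p.2 - q.2) ^+ 2.
Proof. by rewrite sqr_sqrtr /dot /psub /= -!expr2 // addr_ge0 ?sqr_ge0. Qed.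

Lemma eudist_ge0 p q : 0 <= eudist p q.
Proof. exact: sqrtr_ge0. Qed.

Lemma eudistxx p : eudist p p = 0.
Proof. by rewrite /eudist /dot /psub !subrr mulr0 addr0 sqrtr0. Qed.

Lemma eudistC p q : eudist p q = eudist q p.
Proof. by rewrite /eudist /dot /psub /=; congr Num.sqrt; ring. Qed.

Lemma eudist_triangle p q r : eudist p r <= eudist p q + eudist q r.
Proof.
have cauchy_schwarz : (p.1 - q.1) * (q.1 - r.1) + (p.2 - q.2) * (q.2 - r.2)
    <= eudist p q * eudist q r.
  set c := _ + _; have [neg|pos] := lerP c 0.
    by apply: le_trans neg _; rewrite mulr_ge0 ?eudist_ge0.
  rewrite -ler_sqr ?nnegrE ?mulr_ge0 ?eudist_ge0 ?(ltW pos) // exprMn !eudist_sqr /c.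
  by have := sqr_ge0 ((p.1 - q.1) * (q.2 - r.2) - (p.2 - q.2) * (q.1 - r.1)); nra.
rewrite -ler_sqr ?nnegrE ?addr_ge0 ?eudist_ge0 // sqrrD !eudist_sqr.
have -> : p.1 - r.1 = (p.1 - q.1) + (q.1 - r.1) by ring.
have -> : p.2 - r.2 = (p.2 - q.2) + (q.2 - r.2) by ring.
by move: cauchy_schwarz; nra.
Qed.

Lemma eudist_gt0 p q : p <> q -> 0 < eudist p q.
Proof.
move=> neq_pq; rewrite sqrtr_gt0 /dot /psub /= lt_def.
rewrite paddr_eq0 ?mulr_ge0' ?sqr_ge0 -?expr2 ?sqrf_eq0 ?subr_eq0 ?addr_ge0 ?sqr_ge0 // andbT.
by apply: contra_notN neq_pq => /andP[/eqP e1 /eqP e2]; case: p q e1 e2 => ? ? [? ?] /= -> ->.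
Qed.

Lemma eudist_sub_le x p q : eudist x p - eudist x q <= eudist p q.
Proof. by rewrite lerBlDr addrC (eudistC p q) eudist_triangle. Qed.

Lemma unit_vecE nu : unit_vec nu -> nu.1 ^+ 2 + nu.2 ^+ 2 = 1.
Proof. by rewrite /unit_vec /dot !expr2. Qed.

Lemma sqr_dot_le_eudist x p nu : unit_vec nu ->
  dot (psub p x) nu ^+ 2 <= eudist x p ^+ 2.
Proof.
move=> /unit_vecE nu1; rewrite eudist_sqr /dot /psub /=.
have := sqr_ge0 ((p.1 - x.1) * nu.2 - (p.2 - x.2) * nu.1).
rewrite -[_ + (x.2 - p.2) ^+ 2]mulr1 -nu1; nra.
Qed.

(* The point with coordinates [(s, w)] in the orthonormal frame [(nu, nu^perp)]
   centred at [x]. *)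
Definition frame_point x nu s w : pt R :=
  (x.1 + s * nu.1 - w * nu.2, x.2 + s * nu.2 + w * nu.1).

Section Frame.
Variables (x nu : pt R).
Hypothesis nu1 : unit_vec nu.

Lemma dot_frame_point s w : dot (psub (frame_point x nu s w) x) nu = s.
Proof.
rewrite /dot /psub /frame_point /= -[RHS]mulr1 -(unit_vecE nu1); ring.
Qed.

Lemma eudist_frame_point s w s' w' :
  eudist (frame_point x nu s w) (frame_point x nu s' w') ^+ 2 =
  (s - s') ^+ 2 + (w - w') ^+ 2.
Proof.
rewrite eudist_sqr /frame_point /= -[RHS]mulr1 -(unit_vecE nu1); ring.
Qed.

Lemma eudist_center_frame_point s w :
  eudist x (frame_point x nu s w) ^+ 2 = s ^+ 2 + w ^+ 2.
Proof.
rewrite eudist_sqr /frame_point /= -[RHS]mulr1 -(unit_vecE nu1); ring.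
Qed.

End Frame.

Lemma continuous_frame_point x nu (f g : R -> R) :
  continuous f -> continuous g -> continuous (fun t => frame_point x nu (f t) (g t)).
Proof.
move=> cf cg t.
have [cfM cgM] := (fun c => cvgM (cf t) (cvg_cst c), fun c => cvgM (cg t) (cvg_cst c)).
have c1 : x.1 + f s * nu.1 - g s * nu.2 @[s --> t] --> x.1 + f t * nu.1 - g t * nu.2.
  by apply: cvgB; [apply: cvgD; [exact: cvg_cst | exact: cfM] | exact: cgM].
have c2 : x.2 + f s * nu.2 + g s * nu.1 @[s --> t] --> x.2 + f t * nu.2 + g t * nu.1.
  by apply: cvgD; [apply: cvgD; [exact: cvg_cst | exact: cfM] | exact: cgM].
exact: cvg_pair c1 c2.
Qed.

End Euclid.

Section Separation.
Variable R : realType.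
Implicit Types (x nu : pt R) (E : set (pt R)) (r t rho s : R) (b : bool).

Definition half_circle x nu rho b s : pt R :=
  frame_point x nu s ((-1) ^+ b * Num.sqrt (rho ^+ 2 - s ^+ 2)).

Lemma continuous_half_circle x nu rho b : continuous (half_circle x nu rho b).
Proof.
have csqrt : continuous (fun s => Num.sqrt (rho ^+ 2 - s ^+ 2)).
  move=> s; apply: (continuous_comp (f := fun s => rho ^+ 2 - s ^+ 2));
    last exact: sqrt_continuous.
  by apply: cvgB; [exact: cvg_cst | rewrite expr2; exact: cvgM].
apply: (@continuous_frame_point _ x nu id (fun s => (-1) ^+ b * Num.sqrt (rho ^+ 2 - s ^+ 2))).
  by move=> s; exact: cvg_id.
by move=> s; apply: cvgM; [exact: cvg_cst | exact: csqrt].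
Qed.

Lemma eudist_half_circle x nu rho b s : unit_vec nu -> 0 <= rho ->
  s ^+ 2 <= rho ^+ 2 -> eudist x (half_circle x nu rho b s) = rho.
Proof.
move=> nu1 rho_ge0 s_le; apply/eqP; rewrite -(@eqrXn2 _ 2) ?eudist_ge0 //.
by rewrite eudist_center_frame_point // exprMn sqrr_sign mul1r sqr_sqrtr ?subr_ge0 // addrC subrK.
Qed.

Lemma dot_half_circle x nu rho b s : unit_vec nu ->
  dot (psub (half_circle x nu rho b s) x) nu = s.
Proof. by move=> nu1; rewrite /half_circle dot_frame_point. Qed.

Lemma line_width_ge E x r nu y : unit_vec nu -> 0 < r -> E y -> oball x r y ->
  `|dot (psub y x) nu| <= line_width E x r nu.
Proof.
move=> nu1 r_gt0 Ey Bxy; apply: ub_le_sup; last by exists y.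
exists r => _ [z [_ Bxz] <-].
rewrite -ler_sqr ?nnegrE ?(ltW r_gt0) // real_normK ?num_real //.
apply: le_trans (sqr_dot_le_eudist x z nu1) _.
by rewrite ler_sqr ?nnegrE ?eudist_ge0 ?(ltW r_gt0) //; exact: ltW.
Qed.

Definition separates_sides E x r nu t : Prop :=
  let U := oball x r `\` E in
  exists a b : pt R,
    [/\ Dplus x r nu t `<=` connected_component U a,
        Dminus x r nu t `<=` connected_component U b &
        connected_component U a <> connected_component U b].

(* Each half circle of radius [rho > t] joins [Dplus] to [Dminus] inside the ball,
   so it cannot lie in the complement of [E]. *)
Lemma half_circle_meets E x r nu t rho b :
  unit_vec nu -> 0 < rho -> t < rho -> rho < r ->
  separates_sides E x r nu t ->
  exists2 s, s ^+ 2 <= rho ^+ 2 & E (half_circle x nu rho b s).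
Proof.
move=> nu1 rho_gt0 t_lt_rho rho_lt_r [p [q [Dp_p Dm_q neq_pq]]].
apply: contrapT => miss; apply: neq_pq.
set U := oball x r `\` E; set A := half_circle x nu rho b @` `[- rho, rho]%classic.
have connA : connected A.
  apply: connected_continuous_connected; first exact/connected_intervalP/interval_is_interval.
  exact/continuous_subspaceT/continuous_half_circle.
have s_le s : `[- rho, rho]%classic s -> s ^+ 2 <= rho ^+ 2.
  by rewrite /= in_itv /= => /andP[s1 s2]; nra.
have AU : A `<=` U.
  move=> _ [s /s_le s2 <-]; split; last by move=> Es; apply: miss; exists s.
  by rewrite /oball /= eudist_half_circle ?(ltW rho_gt0).
have end_in_D s : s ^+ 2 = rho ^+ 2 -> oball x r (half_circle x nu rho b s).
  by move=> s2; rewrite /oball /= eudist_half_circle ?s2 ?(ltW rho_gt0).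
have Dp : Dplus x r nu t (half_circle x nu rho b rho).
  by split; [exact: end_in_D | rewrite dot_half_circle].
have Dm : Dminus x r nu t (half_circle x nu rho b (- rho)).
  by split; [apply: end_in_D; rewrite sqrrN | rewrite dot_half_circle ?opprK].
have A_ends : A (half_circle x nu rho b rho) /\ A (half_circle x nu rho b (- rho)).
  by split; [exists rho | exists (- rho)]; rewrite //= in_itv /= lexx ?andbT; lra.
rewrite (same_connected_component (Dp_p _ Dp)) (same_connected_component (Dm_q _ Dm)).
apply: same_connected_component; apply: (connected_component_max A_ends.1 AU connA).
exact: A_ends.2.
Qed.

Lemma sphere_far_points E x r nu t rho :
  unit_vec nu -> 0 < r -> E `<=` oball x r -> line_width E x r nu = t ->
  separates_sides E x r nu t -> 0 < rho -> 2 * t < rho -> rho < r ->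
  exists y1 y2, [/\ (E `&` sphere x rho) y1, (E `&` sphere x rho) y2 & rho < eudist y1 y2].
Proof.
move=> nu1 r_gt0 E_ball width sep rho_gt0 two_t rho_lt_r.
have near_line s b : E (half_circle x nu rho b s) -> `|s| <= t.
  move=> Es; rewrite -width -(dot_half_circle x rho b s nu1).
  exact: line_width_ge (E_ball _ Es).
have t_lt_rho : t < rho by lra.
have [s1 s1_le E1] := half_circle_meets false nu1 rho_gt0 t_lt_rho rho_lt_r sep.
have [s2 s2_le E2] := half_circle_meets true nu1 rho_gt0 t_lt_rho rho_lt_r sep.
exists (half_circle x nu rho false s1), (half_circle x nu rho true s2).
split; rewrite /sphere /= ?eudist_half_circle ?(ltW rho_gt0) //.
rewrite -ltr_sqr ?nnegrE ?eudist_ge0 ?(ltW rho_gt0) // eudist_frame_point //.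
rewrite expr0 expr1 mul1r mulN1r opprK.
have sqr_W s : s ^+ 2 <= rho ^+ 2 -> Num.sqrt (rho ^+ 2 - s ^+ 2) ^+ 2 = rho ^+ 2 - s ^+ 2.
  by move=> s_le; rewrite sqr_sqrtr // subr_ge0.
move: (sqr_W _ s1_le) (sqr_W _ s2_le) (near_line _ _ E1) (near_line _ _ E2).
move: (sqrtr_ge0 (rho ^+ 2 - s1 ^+ 2)) (sqrtr_ge0 (rho ^+ 2 - s2 ^+ 2)).
set W1 := Num.sqrt _; set W2 := Num.sqrt _.
by rewrite !ler_norml => ? ? ? ? /andP[? ?] /andP[? ?]; nra.
Qed.

End Separation.

Section Counting.
Local Open Scope ereal_scope.
Variable R : realType.

Lemma size_le_nneseries (F : nat -> \bar R) (s : seq nat) :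
  (forall n, 0 <= F n) -> uniq s -> (forall i, i \in s -> 1 <= F i) ->
  (size s)%:R%:E <= \sum_(n <oo) F n.
Proof.
move=> F_ge0 s_uniq F_ge1.
pose K := (\max_(i <- s) i).+1.
apply: le_trans (nneseries_lim_ge K (fun n _ _ => F_ge0 n)).
have s_lt_K i : i \in s -> (i < K)%N by move=> i_s; rewrite ltnS; exact: leq_bigmax_seq.
have perm_s : perm_eq [seq i <- iota 0 K | i \in s] s.
  apply: uniq_perm; rewrite ?filter_uniq ?iota_uniq // => i.
  by rewrite mem_filter mem_iota add0n andb_idr // => /s_lt_K.
apply: le_trans (lee_sum_nneg_subset (P := xpredT) (Q := mem s) _ (fun i _ => isT)
  (fun i _ => F_ge0 i)).
rewrite -big_filter /index_iota subn0 (perm_big _ perm_s) /=.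
rewrite -sum1_size natr_sum -sumEFin !big_seq.
by apply: lee_sum => i /F_ge1.
Qed.

End Counting.

Section MeasureBounds.
Local Open Scope ereal_scope.
Context d (T : measurableType d) (R : realType).
Variable mu : {measure set T -> \bar R}.

Lemma excess_measure_le_integral (D G : set T) (g : T -> \bar R) (k : R) :
  measurable D -> measurable G -> G `<=` D -> measurable_fun D g -> (0 <= k)%R ->
  (forall x, D x -> k%:E <= g x) -> (forall x, G x -> (k + 1)%:E <= g x) ->
  k%:E * mu D + mu G <= \int[mu]_(x in D) g x.
Proof.
move=> mD mG GD mg k_ge0 g_ge_k g_ge_k1.
have mGE : measurable_fun D (fun x => (\1_G x : R)%:E).
  by apply/measurable_EFinP; exact: measurable_indic.
rewrite -(setIidl GD) -integral_indic // -integral_cst //.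
rewrite -ge0_integralD //.
apply: ge0_le_integral => //.
- by move=> x _; rewrite adde_ge0 // lee_fin ?indicE.
- by apply: emeasurable_funD => //; exact: measurable_cst.
move=> x Dx; rewrite indicE; case: (boolP (x \in G)) => [/set_mem Gx|_].
  by rewrite -EFinD; exact: g_ge_k1.
by rewrite adde0; exact: g_ge_k.
Qed.

Lemma measure_liminf_le (G : nat -> set T) (c : R) :
  (forall n, measurable (G n)) -> (forall n, mu (G n) <= (c + n.+1%:R^-1)%:E) ->
  mu (\bigcup_n \bigcap_m G (m + n)%N) <= c%:E.
Proof.
move=> mG muG.
pose K n := \bigcap_m G (m + n)%N.
have mK n : measurable (K n) by apply: bigcapT_measurable => m; exact: mG.
have muK n : mu (K n) <= c%:E.
  apply/lee_addgt0Pr => e e_gt0.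
  have [N N_lt_e] : exists N : nat, (N.+1%:R^-1 < e)%R.
    by exists (Num.truncn e^-1); rewrite -invf_plt ?posrE // truncnS_gt.
  apply: le_trans (le_trans _ (muG (N + n)%N)) _.
    by apply: le_measure; rewrite ?inE; [exact: mK | exact: mG | move=> x /(_ N I)].
  rewrite EFinD leeD2l // lee_fin ltW // (le_lt_trans _ N_lt_e) //.
  by rewrite lef_pV2 ?posrE // ler_nat ltnS leq_addr.
have K_nd : nondecreasing_seq K.
  by apply/nondecreasing_seqP => n; apply/subsetPset => x Kx m _; rewrite addnS -addSn; exact: Kx.
have K_cvg := nondecreasing_cvg_mu (mu := mu) mK (bigcupT_measurable _ mK) K_nd.
rewrite -(cvg_lim _ K_cvg) //; apply: lime_le; first by apply/cvg_ex; exists (mu (\bigcup_n K n)).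
exact: nearW.
Qed.

End MeasureBounds.

Section DiameterCovers.
Local Open Scope ereal_scope.
Variable R : realType.
Implicit Types (A B : set (pt R)) (x p q : pt R).

Lemma diam_ge0 A : 0 <= diam A.
Proof. by apply: ereal_sup_ubound; left. Qed.

Lemma eudist_le_diam A p q : A p -> A q -> (eudist p q)%:E <= diam A.
Proof. by move=> Ap Aq; apply: ereal_sup_ubound; right; exists p => //; exists q. Qed.

Lemma le_diam A B : A `<=` B -> diam A <= diam B.
Proof.
move=> AB; apply: ereal_sup_le => _ [->|[p Ap [q Aq <-]]]; first by left.
by right; exists p; [exact: AB | exists q => //; exact: AB].
Qed.

Lemma hausdorff1_cover A (M delta eps : R) :
  hausdorff1 A <= M%:E -> (0 < delta)%R -> (0 < eps)%R ->
  exists C : nat -> set (pt R), [/\ A `<=` \bigcup_i C i,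
    forall i, diam (C i) <= delta%:E &
    \sum_(0 <= i <oo) diam (C i) <= (M + eps)%:E].
Proof.
move=> HA delta_gt0 eps_gt0.
have H_delta : hausdorff1_delta A delta <= M%:E.
  by apply: le_trans HA; apply: ereal_sup_ubound; exists delta.
have H_delta_ge0 : 0 <= hausdorff1_delta A delta.
  apply: le_ereal_inf_tmp => _ [C _ <-].
  by apply: nneseries_ge0 => n _ _; exact: diam_ge0.
have H_delta_fin : hausdorff1_delta A delta \is a fin_num.
  by rewrite ge0_fin_numE // (le_lt_trans H_delta) // ltry.
have [_ [C [AC C_small] <-] C_sum] := lb_ereal_inf_adherent eps_gt0 H_delta_fin.
exists C; split => //; apply/ltW; apply: lt_le_trans C_sum _.
by rewrite EFinD leeD2r.
Qed.

Definition radial_hull x A : set R :=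
  `[inf [set eudist x p | p in A], sup [set eudist x p | p in A]]%classic.

Lemma radial_hull_dist x A p : A p -> has_ubound [set eudist x p | p in A] ->
  radial_hull x A (eudist x p).
Proof.
move=> Ap A_ub; rewrite /radial_hull /= in_itv /=; apply/andP; split.
  by apply: ge_inf; [exists 0%R => _ [q _ <-]; exact: eudist_ge0 | exists p].
by apply: ub_le_sup => //; exists p.
Qed.

Lemma lebesgue_radial_hull_le_diam x A : lebesgue_measure (radial_hull x A) <= diam A.
Proof.
rewrite lebesgue_measure_itv /=; case: ifPn => [hull_nonempty|_]; last exact: diam_ge0.
have [[p Ap]|A0] := pselect (A !=set0); last first.
  have A_eq0 : A = set0 by apply/seteqP; split => // y Ay; apply: A0; exists y.
  by move: hull_nonempty; rewrite A_eq0 image_set0 sup0 inf0 ltxx.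
have [->|diam_fin] := eqVneq (diam A) +oo; first by rewrite leey.
have diam_real : diam A \is a fin_num by rewrite ge0_fin_numE ?diam_ge0 // ltey.
rewrite -(fineK diam_real) -EFinB lee_fin lerBlDr.
have dist_le p' q : A p' -> A q -> (eudist x p' <= fine (diam A) + eudist x q)%R.
  move=> Ap' Aq; rewrite -lerBlDr (le_trans (eudist_sub_le _ _ _)) //.
  by rewrite -lee_fin fineK // eudist_le_diam.
apply: ge_sup; first by exists (eudist x p), p.
move=> _ [p' Ap' <-]; rewrite addrC -lerBlDr.
by apply: lb_le_inf; [exists (eudist x p), p | move=> _ [q Aq <-]; rewrite lerBlDr addrC dist_le].
Qed.

End DiameterCovers.

Section CoverMultiplicity.
Local Open Scope ereal_scope.
Variables (R : realType) (x : pt R) (b delta : R) (E : set (pt R)) (C : nat -> set (pt R)).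
Hypotheses (E_ball : E `<=` oball x b) (E_cover : E `<=` \bigcup_i C i)
  (C_small : forall i, diam (C i) <= delta%:E).

Definition cover_multiplicity (rho : R) : \bar R :=
  \sum_(i <oo) (\1_(radial_hull x (C i `&` E)) rho : R)%:E.

Lemma size_le_cover_multiplicity (ps : seq (pt R)) rho :
  {in ps, forall p, (E `&` sphere x rho) p} ->
  pairwise (fun p q => delta < eudist p q)%R ps ->
  (size ps)%:R%:E <= cover_multiplicity rho.
Proof.
move=> ps_sphere ps_apart.
have /choice[piece piece_cover] : forall p, exists i, E p -> C i p.
  move=> p; have [Ep|NEp] := pselect (E p); last by exists 0%N.
  by have [i _ Cip] := E_cover Ep; exists i.
have close_in_piece p q : E p -> E q -> piece p = piece q -> (eudist p q <= delta)%R.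
  move=> Ep Eq same; rewrite -lee_fin; apply: le_trans (C_small (piece p)).
  by apply: eudist_le_diam; [exact: piece_cover | rewrite same; exact: piece_cover].
rewrite -(size_map piece); apply: size_le_nneseries.
- by move=> n; rewrite lee_fin indicE.
- elim: ps ps_sphere ps_apart => //= p ps IH on_sphere /andP[p_apart ps_apart].
  have on_ps : {in ps, forall q, (E `&` sphere x rho) q}.
    by move=> q q_ps; apply: (on_sphere q); rewrite inE q_ps orbT.
  rewrite IH // andbT; apply/mapP => -[q q_ps same].
  have [[Ep _] [Eq _]] := (on_sphere p (mem_head _ _), on_ps q q_ps).
  by move: (allP p_apart q q_ps); rewrite ltNge close_in_piece.
move=> _ /mapP[p p_ps ->]; have [Ep <-] := ps_sphere p p_ps.
rewrite indicE mem_set //; apply: radial_hull_dist; first by split; [exact: piece_cover|].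
by exists b => _ [q [_ Eq] <-]; exact/ltW/E_ball.
Qed.

Lemma measurable_radial_hull (A : set (pt R)) : measurable (radial_hull x A).
Proof. exact: measurable_itv. Qed.

Lemma measurable_cover_multiplicity (D : set R) :
  measurable D -> measurable_fun D cover_multiplicity.
Proof.
move=> mD; apply: ge0_emeasurable_sum => [k rho _ _|k _]; first by rewrite lee_fin indicE.
by apply/measurable_EFinP; apply: measurable_indic; exact: measurable_radial_hull.
Qed.

Lemma integral_cover_multiplicity_le (D : set R) : measurable D ->
  \int[lebesgue_measure]_(rho in D) cover_multiplicity rho <= \sum_(0 <= i <oo) diam (C i).
Proof.
move=> mD; rewrite integral_nneseries //; last first.
  by move=> k; apply/measurable_EFinP; apply: measurable_indic; exact: measurable_radial_hull.
apply: lee_nneseries => [k _ _|k _]; first exact: integral_ge0.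
have mJ := measurable_radial_hull (C k `&` E).
rewrite integral_indic //; apply: le_trans (le_diam (@subIsetl _ (C k) E)).
apply: le_trans (lebesgue_radial_hull_le_diam x _).
by apply: le_measure; rewrite ?inE //; exact: measurableI.
Qed.

End CoverMultiplicity.

Definition three_points_apart (R : realType) (E : set (pt R)) (x : pt R) (delta rho : R) :=
  exists p q c, [/\ (E `&` sphere x rho) p, (E `&` sphere x rho) q, (E `&` sphere x rho) c &
    [/\ delta < eudist p q, delta < eudist p c & delta < eudist q c]].

Lemma three_points_apart_le (R : realType) (E : set (pt R)) x (d1 d2 rho : R) :
  d1 <= d2 -> three_points_apart E x d2 rho -> three_points_apart E x d1 rho.
Proof.
move=> d12 [p [q [c [Sp Sq Sc [pq pc qc]]]]].
by exists p, q, c; split => //; split; exact: le_lt_trans d12 _.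
Qed.

Lemma three_points_apart_distinct (R : realType) (E : set (pt R)) x rho (p q c : pt R) :
  (E `&` sphere x rho) p -> (E `&` sphere x rho) q -> (E `&` sphere x rho) c ->
  p <> q -> p <> c -> q <> c -> exists2 delta, 0 < delta & three_points_apart E x delta rho.
Proof.
move=> Sp Sq Sc /eudist_gt0 pq /eudist_gt0 pc /eudist_gt0 qc.
pose m := Num.min (eudist p q) (Num.min (eudist p c) (eudist q c)).
have m_gt0 : 0 < m by rewrite !lt_min pq pc qc.
have [m_pq m_pc m_qc] : [/\ m <= eudist p q, m <= eudist p c & m <= eudist q c].
  by rewrite !ge_min !lexx !orbT.
by exists (m / 2); [exact: divr_gt0 | exists p, q, c; split => //; split; lra].
Qed.

Lemma sphere_eq_pair (R : realType) (E : set (pt R)) x rho (y1 y2 : pt R) :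
  (E `&` sphere x rho) y1 -> (E `&` sphere x rho) y2 -> y1 <> y2 ->
  (forall delta, 0 < delta -> ~ three_points_apart E x delta rho) ->
  E `&` sphere x rho = [set y1; y2].
Proof.
move=> S1 S2 y1_neq_y2 no_three; apply/seteqP; split => [z Sz|z [->|->]] //.
apply: contrapT => not_y12.
have [y1_neq_z y2_neq_z] : y1 <> z /\ y2 <> z by split=> e; apply: not_y12; [left | right].
have [delta delta_gt0] := three_points_apart_distinct S1 S2 Sz y1_neq_y2 y1_neq_z y2_neq_z.
exact: no_three.
Qed.

Section RadialExcess.
Variables (R : realType) (x : pt R) (a b M : R) (E : set (pt R)).
Let I := `]a, b[%classic.
Hypotheses (a_gt0 : 0 < a) (a_lt_b : a < b) (E_ball : E `<=` oball x b)
  (E_H1 : (hausdorff1 E <= M%:E)%E)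
  (two_apart : forall rho, I rho ->
    exists y1 y2, [/\ (E `&` sphere x rho) y1, (E `&` sphere x rho) y2 & rho < eudist y1 y2]).

Lemma three_point_radii_cover delta eps : 0 < delta <= a -> 0 < eps ->
  exists G : set R, [/\ measurable G, G `<=` I,
    forall rho, I rho -> three_points_apart E x delta rho -> G rho &
    (lebesgue_measure G <= (M - 2 * (b - a) + eps)%:E)%E].
Proof.
move=> /andP[delta_gt0 delta_le_a] eps_gt0.
have [C [E_cover C_small C_sum]] := hausdorff1_cover E_H1 delta_gt0 eps_gt0.
pose N := cover_multiplicity x E C.
have points_le_N := size_le_cover_multiplicity E_ball E_cover C_small.
have mI : measurable I by exact: measurable_itv.
pose G := I `&` N @^-1` `[3%:E, +oo[%classic.
have mG : measurable G by apply: measurable_cover_multiplicity => //; exact: emeasurable_itv.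
exists G; split => //; first by move=> ? [].
  move=> rho I_rho [p [q [c [Sp Sq Sc [pq pc qc]]]]]; split => //=.
  rewrite in_itv /= andbT; apply: (points_le_N [:: p; q; c]) => /=.
    by move=> y; rewrite !inE => /or3P[] /eqP ->.
  by rewrite pq pc qc.
have N_ge2 rho : I rho -> (2%:E <= N rho)%E.
  move=> I_rho; have [y1 [y2 [S1 S2 apart]]] := two_apart I_rho.
  apply: (points_le_N [:: y1; y2]) => /=; first by move=> y; rewrite !inE => /orP[] /eqP ->.
  move: I_rho; rewrite /I /= in_itv /= andbT => /andP[a_lt_rho _].
  by rewrite (le_lt_trans delta_le_a) // (lt_trans a_lt_rho).
have N_ge3 rho : G rho -> ((2 + 1)%:E <= N rho)%E.
  have -> : (2 + 1 : R) = 3 by lra.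
  by case=> _; rewrite /= in_itv /= andbT.
have bound : (2%:E * lebesgue_measure I + lebesgue_measure G <= (M + eps)%:E)%E.
  apply: le_trans (excess_measure_le_integral lebesgue_measure mI mG (@subIsetl _ _ _)
    (measurable_cover_multiplicity x E C mI) (ler0n _ 2) N_ge2 N_ge3) _.
  exact: le_trans (integral_cover_multiplicity_le x E C mI) C_sum.
have I_len : lebesgue_measure I = (b - a)%:E.
  by rewrite /I lebesgue_measure_itv /= lte_fin a_lt_b EFinB.
have G_fin : lebesgue_measure G \is a fin_num.
  rewrite ge0_fin_numE ?measure_ge0 //; apply: le_lt_trans (ltry (b - a)).
  by rewrite -I_len; apply: le_measure; rewrite ?inE // => ? [].
move: bound; rewrite I_len -(fineK G_fin) -EFinM -EFinD lee_fin => bound.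
by rewrite lee_fin; lra.
Qed.

Lemma three_point_radii_measure : exists H : set R, [/\ measurable H,
    forall rho delta, I rho -> 0 < delta -> three_points_apart E x delta rho -> H rho &
    (lebesgue_measure H <= (M - 2 * (b - a))%:E)%E].
Proof.
have /choice[G G_cover] n : exists G : set R, [/\ measurable G, G `<=` I,
    forall rho, I rho -> three_points_apart E x (a / n.+1%:R) rho -> G rho &
    (lebesgue_measure G <= (M - 2 * (b - a) + n.+1%:R^-1)%:E)%E].
  apply: three_point_radii_cover; last by rewrite invr_gt0.
  by rewrite divr_gt0 //= ler_pdivrMr // ler_peMr ?(ltW a_gt0) // ler1n.
have mG n : measurable (G n) by have [] := G_cover n.
exists (\bigcup_n \bigcap_m G (m + n)%N); split.
- by apply: bigcupT_measurable => n; exact: bigcapT_measurable.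
- move=> rho delta I_rho delta_gt0 three.
  pose N := Num.truncn (a / delta).
  have aN_lt_delta : a / N.+1%:R < delta.
    by rewrite ltr_pdivrMr // -ltr_pdivrMl // mulrC truncnS_gt.
  exists N => // m _; have [_ _ G_three _] := G_cover (m + N)%N; apply: G_three => //.
  apply: three_points_apart_le three; apply: ltW (le_lt_trans _ aN_lt_delta).
  by rewrite ler_pM2l // lef_pV2 ?posrE // ler_nat ltnS leq_addl.
- by apply: measure_liminf_le => // n; have [] := G_cover n.
Qed.

End RadialExcess.

Theorem lemma4p29 (R : realType) (x0 : pt R) (r0 : R) (E : set (pt R)) :
  0 < r0 ->
  rel_closed E (oball x0 r0) ->
  E x0 ->
  beta E x0 r0 <= 32^-1 ->
  separates E x0 r0 ->
  (hausdorff1 E <= ((2 + 8^-1) * r0)%:E)%E ->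
  exists Xi : set R,
    [/\ Xi `<=` `](r0 / 16)%R, r0%R[%classic,
        (lebesgue_measure (`](r0 / 16)%R, r0%R[%classic `\` Xi) <= (r0 / 4)%:E)%E &
        forall rho, Xi rho ->
          exists a b : pt R,
            E `&` sphere x0 rho = [set a; b] /\ eudist a b > rho].
Proof.
move=> r0_gt0 [E_ball _] _ beta_small [_ [nu [nu1 width sep]]] E_H1.
set I := `](r0 / 16)%R, r0%R[%classic.
have two_apart rho : I rho -> exists y1 y2, [/\ (E `&` sphere x0 rho) y1,
    (E `&` sphere x0 rho) y2 & rho < eudist y1 y2].
  rewrite /I /= in_itv /= => /andP[rho_gt rho_lt].
  apply: (sphere_far_points nu1 r0_gt0 E_ball width sep _ _ rho_lt); first lra.
  by move: beta_small; rewrite -(ler_pM2r r0_gt0); lra.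
have [||H [mH H_three H_small]] :=
  three_point_radii_measure (a := r0 / 16) (M := (2 + 8^-1) * r0) _ _ E_ball E_H1 two_apart.
- lra.
- lra.
exists (I `\` H); split; first exact: subDsetl.
  rewrite setDD; apply: le_trans (_ : _ <= lebesgue_measure H)%E (le_trans H_small _).
    by apply: le_measure; rewrite ?inE //; apply: measurableI => //; exact: measurable_itv.
  by rewrite lee_fin; lra.
move=> rho [I_rho not_H]; have [y1 [y2 [S1 S2 apart]]] := two_apart rho I_rho.
exists y1, y2; split => //; apply: (sphere_eq_pair S1 S2).
  by move=> y12; move: apart (eudist_ge0 x0 y1); rewrite (proj2 S1) y12 eudistxx; lra.
by move=> delta delta_gt0 three; apply: not_H; exact: H_three three.
Qed.
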